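(* Assume Assumptions 1, 2 and 3 and $0<P(Z=1\mid R=r)<1$, $P(R=r)>0$ for $r=1,2$. Write $\omega_{ys\mid zr}=P(Y=y,S=s\mid Z=z,R=r)$ and $\delta_{zu}=P(Y=1\mid Z=z,U=u)$. Then $\pi_{\bar{s}\bar{s},r}=P(S=0\mid Z=1,R=r)$, $\pi_{ss,r}=P(S=1\mid Z=0,R=r)$ and $\pi_{s\bar{s},r}=1-\pi_{ss,r}-\pi_{\bar{s}\bar{s},r}$. If $\pi_{ss,1}\pi_{s\bar{s},2}-\pi_{ss,2}\pi_{s\bar{s},1}\neq 0$, then $$\delta_{1,ss}=\frac{\omega_{11\mid 11}\pi_{s\bar{s},2}-\omega_{11\mid 12}\pi_{s\bar{s},1}}{\pi_{ss,1}\pi_{s\bar{s},2}-\pi_{ss,2}\pi_{s\bar{s},1}},\qquad \delta_{1,s\bar{s}}=\frac{\omega_{11\mid 12}\pi_{ss,1}-\omega_{11\mid 11}\pi_{ss,2}}{\pi_{ss,1}\pi_{s\bar{s},2}-\pi_{ss,2}\pi_{s\bar{s},1}}.$$ If $\pi_{s\bar{s},1}\pi_{\bar{s}\bar{s},2}-\pi_{s\bar{s},2}\pi_{\bar{s}\bar{s},1}\neq 0$, then $$\delta_{0,s\bar{s}}=\frac{\omega_{10\mid 01}\pi_{\bar{s}\bar{s},2}-\omega_{10\mid 02}\pi_{\bar{s}\bar{s},1}}{\pi_{s\bar{s},1}\pi_{\bar{s}\bar{s},2}-\pi_{s\bar{s},2}\pi_{\bar{s}\bar{s},1}},\qquad \delta_{0,\bar{s}\bar{s}}=\frac{\omega_{10\mid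 02}\pi_{s\bar{s},1}-\omega_{10\mid 01}\pi_{s\bar{s},2}}{\pi_{s\bar{s},1}\pi_{\bar{s}\bar{s},2}-\pi_{s\bar{s},2}\pi_{\bar{s}\bar{s},1}}.$$ (Here $\delta_{1,ss},\delta_{1,s\bar{s}}$, resp. $\delta_{0,s\bar{s}},\delta_{0,\bar{s}\bar{s}}$, are assumed defined, i.e. the corresponding strata have positive probability.)
   Context: Setting: $N_R=2$ trials. A unit is described by $(R,Z,S(1),S(0),Y(1),Y(0))$ with $R\in\{1,2\}$ the trial, $Z\in\{0,1\}$ the treatment, $S(z),Y(z)\in\{0,1\}$ potential surrogate and endpoint. Observed $S=ZS(1)+(1-Z)S(0)$, $Y=ZY(1)+(1-Z)Y(0)$. $U=(S(1),S(0))$ with values $(1,1),(1,0),(0,1),(0,0)$ labeled $ss,s\bar{s},\bar{s}s,\bar{s}\bar{s}$; $\pi_{ur}=P(U=u\mid R=r)$. Assumption 1 (randomization): $Z\perp\!\!\!\perp\{S(1),S(0),Y(1),Y(0)\}\mid R$. Assumption 2 (monotonicity): $S(1)\ge S(0)$ almost surely. Assumption 3 (homogeneity): $R\perp\!\!\!\perp Y(z)\mid U$ for $z=0,1$; under Assumptions 1 and 3, $P(Y=1\mid Z=z,U=u,R=r)=P(Y=1\mid Z=z,U=u)$. *)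

(* a discrete joint law of (R,Z,S(1),S(0),Y(1),Y(0)) is a pmf
   on the finite type of its 2*2*2*2*2*2 = 64 possible values. *)
From HB Require Import structures.
From mathcomp Require Import all_boot all_order all_algebra.
Set Implicit Arguments. Unset Strict Implicit. Unset Printing Implicit Defensive.
Import Order.TTheory GRing.Theory Num.Theory.
Local Open Scope ring_scope.

(* outcome = (((((trial2?, Z), S(1)), S(0)), Y(1)), Y(0)); booleans encode 0/1 *)
Definition outcome := (bool * bool * bool * bool * bool * bool)%type.

Definition Rv (w : outcome) : nat := if w.1.1.1.1.1 then 2%N else 1%N.
Definition Zv (w : outcome) : bool := w.1.1.1.1.2.
Definition S1v (w : outcome) : bool := w.1.1.1.2.
Definition S0v (w : outcome) : bool := w.1.1.2.
Definition Y1v (w : outcome) : bool := w.1.2.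
Definition Y0v (w : outcome) : bool := w.2.

Definition Sz (z : bool) (w : outcome) : bool := if z then S1v w else S0v w.
Definition Yz (z : bool) (w : outcome) : bool := if z then Y1v w else Y0v w.
Definition Sobs (w : outcome) : bool := Sz (Zv w) w.
Definition Yobs (w : outcome) : bool := Yz (Zv w) w.

Definition Uv (w : outcome) : bool * bool := (S1v w, S0v w).
Definition u_ss : bool * bool := (true, true).
Definition u_ssbar : bool * bool := (true, false).
Definition u_sbars : bool * bool := (false, true).
Definition u_sbarsbar : bool * bool := (false, false).

Definition pot (w : outcome) : bool * bool * bool * bool :=
  (S1v w, S0v w, Y1v w, Y0v w).

Section Prob.
Variable K : realFieldType.
Variable p : outcome -> K.

Definition is_pmf : Prop := (forall w, 0 <= p w) /\ \sum_(w : outcome) p w = 1.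

Definition Prob (A : pred outcome) : K := \sum_(w : outcome | A w) p w.

Definition CondP (A B : pred outcome) : K :=
  Prob [pred w | A w && B w] / Prob B.

(* Assumption 1: Z independent of (S(1),S(0),Y(1),Y(0)) given R *)
Definition randomization : Prop :=
  forall (r : nat) (z : bool) (v : bool * bool * bool * bool),
    Prob [pred w | (Zv w == z) && (pot w == v) && (Rv w == r)] * Prob [pred w | Rv w == r]
    = Prob [pred w | (Zv w == z) && (Rv w == r)] * Prob [pred w | (pot w == v) && (Rv w == r)].

(* Assumption 2: S(1) >= S(0) almost surely *)
Definition monotonicity : Prop := Prob [pred w | ~~ S1v w && S0v w] = 0.

(* Assumption 3: R independent of Y(z) given U, for z = 0,1 *)
Definition homogeneity : Prop :=
  forall (z : bool) (r : nat) (y : bool) (u : bool * bool),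
    Prob [pred w | (Rv w == r) && (Yz z w == y) && (Uv w == u)] * Prob [pred w | Uv w == u]
    = Prob [pred w | (Rv w == r) && (Uv w == u)] * Prob [pred w | (Yz z w == y) && (Uv w == u)].

Definition piU (u : bool * bool) (r : nat) : K :=
  CondP [pred w | Uv w == u] [pred w | Rv w == r].

Definition omega (y s z : bool) (r : nat) : K :=
  CondP [pred w | (Yobs w == y) && (Sobs w == s)] [pred w | (Zv w == z) && (Rv w == r)].

Definition delta (z : bool) (u : bool * bool) : K :=
  CondP [pred w | Yobs w] [pred w | (Zv w == z) && (Uv w == u)].

End Prob.

(* Randomization makes the law of (S(1), S(0), Y(1), Y(0)) the same in both arms of a trial,
   so conditioning an event about the potential outcomes on (Z = z, R = r) is the same as
   conditioning it on R = r.  By monotonicity the treated units with S = 0 are exactly the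
   stratum s̄s̄ and the control units with S = 1 exactly the stratum ss, which identifies the
   pi's.  Splitting {Y = 1, S = 1} in the treated arm (resp. {Y = 1, S = 0} in the control arm)
   along the two strata it meets, and using homogeneity to make P(Y(z) = 1 | U = u) independent
   of the trial, gives
     omega_{11|1r} = pi_{ss,r} d_{1,ss} + pi_{ss̄,r} d_{1,ss̄},
     omega_{10|0r} = pi_{ss̄,r} d_{0,ss̄} + pi_{s̄s̄,r} d_{0,s̄s̄},
   with d_{zu} = P(Y(z) = 1 | U = u) = delta_{zu}.  The two trials r = 1, 2 give a 2x2 linear
   system for each z, solved by Cramer's rule. *)

From HB Require Import structures.
From mathcomp Require Import all_boot all_order all_algebra.
From mathcomp Require Import ring lra.
Import Order.TTheory GRing.Theory Num.Theory.
Set Implicit Arguments. Unset Strict Implicit. Unset Printing Implicit Defensive.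
Local Open Scope ring_scope.

Ltac outcome_cases := by move=> [[[[[[] []] []] []] []] []] /=; rewrite ?andbT ?andbF.

Lemma cramer2 (F : fieldType) (a1 b1 a2 b2 x y o1 o2 : F) :
  a1 * b2 - a2 * b1 != 0 -> o1 = a1 * x + b1 * y -> o2 = a2 * x + b2 * y ->
  x = (o1 * b2 - o2 * b1) / (a1 * b2 - a2 * b1) /\
  y = (o2 * a1 - o1 * a2) / (a1 * b2 - a2 * b1).
Proof. by move=> hD -> ->; split; apply: (mulIf hD); rewrite divfK //; ring. Qed.

Section JointLaw.

Variables (K : realFieldType) (p : outcome -> K).

Definition pot_response (z : bool) (u : bool * bool) : K :=
  CondP p [pred w | Yz z w] [pred w | Uv w == u].

Lemma eq_Prob (A B : pred outcome) : A =1 B -> Prob p A = Prob p B.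
Proof. exact: eq_bigl. Qed.

Lemma Prob_split (A B : pred outcome) :
  Prob p A = Prob p [pred w | A w && B w] + Prob p [pred w | A w && ~~ B w].
Proof. exact: bigID. Qed.

Lemma Prob_partition (J : finType) (f : outcome -> J) (A : pred outcome) (Q : pred J) :
  Prob p [pred w | A w && Q (f w)] = \sum_(v | Q v) Prob p [pred w | A w && (f w == v)].
Proof.
rewrite /Prob (partition_big f Q) => [|w /andP[]//].
apply: eq_bigr => v Qv; apply: eq_bigl => w /=.
by case: eqP => [->|]; rewrite ?Qv ?andbT ?andbF.
Qed.

Lemma Prob_trial_split (A : pred outcome) :
  Prob p A = Prob p [pred w | A w && (Rv w == 1%N)] + Prob p [pred w | A w && (Rv w == 2%N)].
Proof.
rewrite (Prob_split A [pred w | Rv w == 1%N]); congr (_ + _).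
by apply: eq_Prob => w /=; rewrite /Rv; case: ifP.
Qed.

Hypothesis pmf : is_pmf p.

Lemma Prob_ge0 (A : pred outcome) : 0 <= Prob p A.
Proof. by case: pmf => p_ge0 _; apply: sumr_ge0. Qed.

Lemma Prob_andr_le (A B : pred outcome) : Prob p [pred w | A w && B w] <= Prob p B.
Proof.
rewrite (Prob_split B A) (eq_Prob (B := [pred w | B w && A w])) ?lerDl ?Prob_ge0 //.
by move=> w /=; rewrite andbC.
Qed.

Lemma Prob_stratum_neq0 (z : bool) (u : bool * bool) :
  0 < Prob p [pred w | (Zv w == z) && (Uv w == u)] -> Prob p [pred w | Uv w == u] != 0.
Proof. by move=> ZU_gt0; rewrite gt_eqF // (lt_le_trans ZU_gt0) // Prob_andr_le. Qed.

Lemma Prob_null_andl (A B : pred outcome) :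
  Prob p A = 0 -> Prob p [pred w | A w && B w] = 0.
Proof.
move=> A0; apply/eqP; rewrite eq_le Prob_ge0 andbT -A0 (Prob_split A B) lerDl.
exact: Prob_ge0.
Qed.

Lemma Prob_trial_Z_gt0 (r : nat) (z : bool) :
  0 < Prob p [pred w | Rv w == r] ->
  0 < CondP p [pred w | Zv w] [pred w | Rv w == r] < 1 ->
  0 < Prob p [pred w | (Zv w == z) && (Rv w == r)].
Proof.
move=> R_gt0; rewrite /CondP ltr_pdivlMr // ltr_pdivrMr // mul0r mul1r.
rewrite (Prob_split [pred w | Rv w == r] Zv).
have -> : Prob p [pred w | Zv w && (Rv w == r)] = Prob p [pred w | (Rv w == r) && Zv w].
  by apply: eq_Prob => w /=; rewrite andbC.
have -> : Prob p [pred w | (Zv w == z) && (Rv w == r)] =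
          Prob p [pred w | (Rv w == r) && (if z then Zv w else ~~ Zv w)].
  by apply: eq_Prob => w /=; rewrite andbC; case: z; case: (Zv w).
by case: z => /andP[treated_gt0]; rewrite ?ltrDl.
Qed.

Lemma eq_CondP (A A' B B' : pred outcome) :
  (forall w, A w && B w = A' w && B' w) -> B =1 B' -> CondP p A B = CondP p A' B'.
Proof. by move=> eqAB eqB; rewrite /CondP (eq_Prob eqAB) (eq_Prob eqB). Qed.

Hypotheses (rand : randomization p) (mono : monotonicity p) (hom : homogeneity p).

Lemma randomization_pot (Q : pred (bool * bool * bool * bool)) (z : bool) (r : nat) :
  Prob p [pred w | (Zv w == z) && Q (pot w) && (Rv w == r)] * Prob p [pred w | Rv w == r]
  = Prob p [pred w | (Zv w == z) && (Rv w == r)] * Prob p [pred w | Q (pot w) && (Rv w == r)].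
Proof.
have -> : Prob p [pred w | (Zv w == z) && Q (pot w) && (Rv w == r)] =
          Prob p [pred w | ((Zv w == z) && (Rv w == r)) && Q (pot w)].
  by apply: eq_Prob => w /=; rewrite -andbA [Q _ && _]andbC andbA.
have -> : Prob p [pred w | Q (pot w) && (Rv w == r)] =
          Prob p [pred w | (Rv w == r) && Q (pot w)].
  by apply: eq_Prob => w /=; rewrite andbC.
rewrite !Prob_partition mulr_suml mulr_sumr; apply: eq_bigr => v _.
rewrite (eq_Prob (B := [pred w | (Zv w == z) && (pot w == v) && (Rv w == r)])); last first.
  by move=> w /=; case: (Zv w == z); case: (Rv w == r); case: (pot w == v).
rewrite (eq_Prob (A := [pred w | (Rv w == r) && (pot w == v)])
                 (B := [pred w | (pot w == v) && (Rv w == r)])) ?rand // => w /=.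
by rewrite andbC.
Qed.

Lemma CondP_pot_trial_Z (Q : pred (bool * bool * bool * bool)) (z : bool) (r : nat) :
  Prob p [pred w | Rv w == r] != 0 -> Prob p [pred w | (Zv w == z) && (Rv w == r)] != 0 ->
  CondP p [pred w | Q (pot w)] [pred w | (Zv w == z) && (Rv w == r)] =
  CondP p [pred w | Q (pot w)] [pred w | Rv w == r].
Proof.
move=> R_neq0 ZR_neq0; rewrite /CondP; apply/eqP; rewrite eqr_div //; apply/eqP.
rewrite (eq_Prob (B := [pred w | (Zv w == z) && Q (pot w) && (Rv w == r)])); last first.
  by move=> w /=; case: (Zv w == z); case: (Q (pot w)); case: (Rv w == r).
by rewrite randomization_pot mulrC.
Qed.

Lemma Prob_notS1_trial (r : nat) :
  Prob p [pred w | ~~ S1v w && (Rv w == r)] =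
  Prob p [pred w | (Uv w == u_sbarsbar) && (Rv w == r)].
Proof.
have defiers := Prob_null_andl [pred w | Rv w == r] mono.
rewrite (Prob_split _ S0v) -[RHS]add0r -defiers.
by congr (_ + _); apply: eq_Prob; outcome_cases.
Qed.

Lemma Prob_S0_trial (r : nat) :
  Prob p [pred w | S0v w && (Rv w == r)] = Prob p [pred w | (Uv w == u_ss) && (Rv w == r)].
Proof.
have defiers := Prob_null_andl [pred w | Rv w == r] mono.
rewrite (Prob_split _ S1v) -[RHS]addr0 -defiers.
by congr (_ + _); apply: eq_Prob; outcome_cases.
Qed.

Lemma Prob_trial_strata (r : nat) :
  Prob p [pred w | Rv w == r] =
  Prob p [pred w | (Uv w == u_ss) && (Rv w == r)] +
  Prob p [pred w | (Uv w == u_ssbar) && (Rv w == r)] +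
  Prob p [pred w | (Uv w == u_sbarsbar) && (Rv w == r)].
Proof.
rewrite (Prob_split _ S1v) (Prob_split [pred w | _ && S1v w] S0v) -Prob_notS1_trial.
by congr (_ + _ + _); apply: eq_Prob; outcome_cases.
Qed.

Lemma piU_sbarsbar_treated (r : nat) :
  Prob p [pred w | Rv w == r] != 0 -> Prob p [pred w | (Zv w == true) && (Rv w == r)] != 0 ->
  piU p u_sbarsbar r = CondP p [pred w | ~~ Sobs w] [pred w | Zv w && (Rv w == r)].
Proof.
move=> R_neq0 ZR_neq0.
rewrite (eq_CondP (A' := [pred w | ~~ (pot w).1.1.1])
                  (B' := [pred w | (Zv w == true) && (Rv w == r)])); [|outcome_cases..].
rewrite (CondP_pot_trial_Z (fun v => ~~ v.1.1.1)) // /piU /CondP -Prob_notS1_trial.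
by congr (_ / _); apply: eq_Prob; outcome_cases.
Qed.

Lemma piU_ss_control (r : nat) :
  Prob p [pred w | Rv w == r] != 0 -> Prob p [pred w | (Zv w == false) && (Rv w == r)] != 0 ->
  piU p u_ss r = CondP p [pred w | Sobs w] [pred w | ~~ Zv w && (Rv w == r)].
Proof.
move=> R_neq0 ZR_neq0.
rewrite (eq_CondP (A' := [pred w | (pot w).1.1.2])
                  (B' := [pred w | (Zv w == false) && (Rv w == r)])); [|outcome_cases..].
rewrite (CondP_pot_trial_Z (fun v => v.1.1.2)) // /piU /CondP -Prob_S0_trial.
by congr (_ / _); apply: eq_Prob; outcome_cases.
Qed.

Lemma piU_ssbar_complement (r : nat) :
  Prob p [pred w | Rv w == r] != 0 ->
  piU p u_ssbar r = 1 - piU p u_ss r - piU p u_sbarsbar r.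
Proof.
by rewrite /piU /CondP (Prob_trial_strata r) => R_neq0; field.
Qed.

Lemma Prob_Yz_stratum_trial (z : bool) (u : bool * bool) (r : nat) :
  Prob p [pred w | Uv w == u] != 0 ->
  Prob p [pred w | (Rv w == r) && (Yz z w == true) && (Uv w == u)] =
  Prob p [pred w | (Uv w == u) && (Rv w == r)] * pot_response z u.
Proof.
move=> U_neq0; apply: (mulIf U_neq0); rewrite hom /pot_response /CondP mulrA divfK //.
congr (_ * _); apply: eq_Prob => w /=; first by rewrite andbC.
by rewrite eqb_id.
Qed.

Lemma omega_treated (r : nat) :
  Prob p [pred w | Rv w == r] != 0 -> Prob p [pred w | (Zv w == true) && (Rv w == r)] != 0 ->
  Prob p [pred w | Uv w == u_ss] != 0 -> Prob p [pred w | Uv w == u_ssbar] != 0 ->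
  omega p true true true r =
  piU p u_ss r * pot_response true u_ss + piU p u_ssbar r * pot_response true u_ssbar.
Proof.
move=> R_neq0 ZR_neq0 ss_neq0 ssbar_neq0.
rewrite /omega (eq_CondP (A' := [pred w | (pot w).1.2 && (pot w).1.1.1])
                         (B' := [pred w | (Zv w == true) && (Rv w == r)])); [|outcome_cases..].
rewrite (CondP_pot_trial_Z (fun v => v.1.2 && v.1.1.1)) // /piU /CondP.
rewrite mulrAC [X in _ = _ + X]mulrAC -mulrDl -!Prob_Yz_stratum_trial // (Prob_split _ S0v).
by congr ((_ + _) / _); apply: eq_Prob; outcome_cases.
Qed.

Lemma omega_control (r : nat) :
  Prob p [pred w | Rv w == r] != 0 -> Prob p [pred w | (Zv w == false) && (Rv w == r)] != 0 ->
  Prob p [pred w | Uv w == u_ssbar] != 0 -> Prob p [pred w | Uv w == u_sbarsbar] != 0 ->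
  omega p true false false r =
  piU p u_ssbar r * pot_response false u_ssbar +
  piU p u_sbarsbar r * pot_response false u_sbarsbar.
Proof.
move=> R_neq0 ZR_neq0 ssbar_neq0 sbarsbar_neq0.
rewrite /omega (eq_CondP (A' := [pred w | (pot w).2 && ~~ (pot w).1.1.2])
                         (B' := [pred w | (Zv w == false) && (Rv w == r)])); [|outcome_cases..].
rewrite (CondP_pot_trial_Z (fun v => v.2 && ~~ v.1.1.2)) // /piU /CondP.
rewrite mulrAC [X in _ = _ + X]mulrAC -mulrDl -!Prob_Yz_stratum_trial // (Prob_split _ S1v).
by congr ((_ + _) / _); apply: eq_Prob; outcome_cases.
Qed.

Lemma Prob_Z_Yz_stratum_trial (z : bool) (u : bool * bool) (r : nat) :
  Prob p [pred w | Rv w == r] != 0 -> Prob p [pred w | Uv w == u] != 0 ->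
  Prob p [pred w | (Zv w == z) && (Yz z w && (Uv w == u)) && (Rv w == r)] =
  Prob p [pred w | (Zv w == z) && (Uv w == u) && (Rv w == r)] * pot_response z u.
Proof.
move=> R_neq0 U_neq0; apply: (mulIf R_neq0).
pose response (v : bool * bool * bool * bool) :=
  (if z then v.1.2 else v.2) && ((v.1.1.1, v.1.1.2) == u).
pose stratum (v : bool * bool * bool * bool) := (v.1.1.1, v.1.1.2) == u.
rewrite (randomization_pot response) mulrAC (randomization_pot stratum) -mulrA.
have stratum_trial : Prob p [pred w | stratum (pot w) && (Rv w == r)] =
                     Prob p [pred w | (Uv w == u) && (Rv w == r)] by [].
congr (_ * _); rewrite stratum_trial -Prob_Yz_stratum_trial //.
by apply: eq_Prob => w /=; rewrite eqb_id -andbA andbC.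
Qed.

Lemma delta_pot_response (z : bool) (u : bool * bool) :
  Prob p [pred w | Rv w == 1%N] != 0 -> Prob p [pred w | Rv w == 2%N] != 0 ->
  Prob p [pred w | Uv w == u] != 0 -> Prob p [pred w | (Zv w == z) && (Uv w == u)] != 0 ->
  delta p z u = pot_response z u.
Proof.
move=> R1_neq0 R2_neq0 U_neq0 ZU_neq0.
have observed_response (r : nat) :
    Prob p [pred w | (Yobs w && ((Zv w == z) && (Uv w == u))) && (Rv w == r)] =
    Prob p [pred w | (Zv w == z) && (Yz z w && (Uv w == u)) && (Rv w == r)].
  by apply: eq_Prob; case: z {ZU_neq0}; outcome_cases.
rewrite /delta /CondP Prob_trial_split !observed_response.
rewrite !Prob_Z_Yz_stratum_trial // -mulrDl -Prob_trial_split mulrC mulKf //.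
Qed.

End JointLaw.

Theorem mainTheorem3 (K : realFieldType) (p : outcome -> K) :
  is_pmf p -> randomization p -> monotonicity p -> homogeneity p ->
  (forall r : nat, (r = 1%N \/ r = 2%N) ->
     0 < CondP p [pred w | Zv w] [pred w | Rv w == r] < 1) ->
  (forall r : nat, (r = 1%N \/ r = 2%N) -> 0 < Prob p [pred w | Rv w == r]) ->
  (forall r : nat, (r = 1%N \/ r = 2%N) ->
     [/\ piU p u_sbarsbar r = CondP p [pred w | ~~ Sobs w] [pred w | Zv w && (Rv w == r)],
         piU p u_ss r = CondP p [pred w | Sobs w] [pred w | ~~ Zv w && (Rv w == r)]
       & piU p u_ssbar r = 1 - piU p u_ss r - piU p u_sbarsbar r])
  /\
  (piU p u_ss 1%N * piU p u_ssbar 2%N - piU p u_ss 2%N * piU p u_ssbar 1%N != 0 ->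
   0 < Prob p [pred w | Zv w && (Uv w == u_ss)] ->
   0 < Prob p [pred w | Zv w && (Uv w == u_ssbar)] ->
   delta p true u_ss =
     (omega p true true true 1%N * piU p u_ssbar 2%N - omega p true true true 2%N * piU p u_ssbar 1%N)
     / (piU p u_ss 1%N * piU p u_ssbar 2%N - piU p u_ss 2%N * piU p u_ssbar 1%N)
   /\
   delta p true u_ssbar =
     (omega p true true true 2%N * piU p u_ss 1%N - omega p true true true 1%N * piU p u_ss 2%N)
     / (piU p u_ss 1%N * piU p u_ssbar 2%N - piU p u_ss 2%N * piU p u_ssbar 1%N))
  /\
  (piU p u_ssbar 1%N * piU p u_sbarsbar 2%N - piU p u_ssbar 2%N * piU p u_sbarsbar 1%N != 0 ->
   0 < Prob p [pred w | ~~ Zv w && (Uv w == u_ssbar)] ->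
   0 < Prob p [pred w | ~~ Zv w && (Uv w == u_sbarsbar)] ->
   delta p false u_ssbar =
     (omega p true false false 1%N * piU p u_sbarsbar 2%N - omega p true false false 2%N * piU p u_sbarsbar 1%N)
     / (piU p u_ssbar 1%N * piU p u_sbarsbar 2%N - piU p u_ssbar 2%N * piU p u_sbarsbar 1%N)
   /\
   delta p false u_sbarsbar =
     (omega p true false false 2%N * piU p u_ssbar 1%N - omega p true false false 1%N * piU p u_ssbar 2%N)
     / (piU p u_ssbar 1%N * piU p u_sbarsbar 2%N - piU p u_ssbar 2%N * piU p u_sbarsbar 1%N)).
Proof.
move=> pmf rand mono hom Z_in_01 R_gt0.
have trial_neq0 r : r = 1%N \/ r = 2%N -> [/\ Prob p [pred w | Rv w == r] != 0,
    Prob p [pred w | (Zv w == true) && (Rv w == r)] != 0 &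
    Prob p [pred w | (Zv w == false) && (Rv w == r)] != 0].
  move=> r12; have R_pos := R_gt0 r r12.
  by split; apply: lt0r_neq0; [|apply: Prob_trial_Z_gt0 R_pos (Z_in_01 r r12)..].
have Prob_Z_stratum (z : bool) (u : bool * bool) :
    Prob p [pred w | (if z then Zv w else ~~ Zv w) && (Uv w == u)] =
    Prob p [pred w | (Zv w == z) && (Uv w == u)].
  by apply: eq_Prob => w /=; case: z; case: (Zv w).
have [R1 T1 C1] := trial_neq0 1%N (or_introl erefl).
have [R2 T2 C2] := trial_neq0 2%N (or_intror erefl).
split; [|split].
- move=> r /trial_neq0[R T C]; split.
  + exact: piU_sbarsbar_treated.
  + exact: piU_ss_control.
  + exact: piU_ssbar_complement.
- rewrite !(Prob_Z_stratum true) => D ss_gt0 ssbar_gt0.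
  have ss_neq0 := Prob_stratum_neq0 pmf ss_gt0.
  have ssbar_neq0 := Prob_stratum_neq0 pmf ssbar_gt0.
  rewrite (delta_pot_response rand hom R1 R2 ss_neq0 (lt0r_neq0 ss_gt0)).
  rewrite (delta_pot_response rand hom R1 R2 ssbar_neq0 (lt0r_neq0 ssbar_gt0)).
  exact: cramer2 D (omega_treated rand hom R1 T1 ss_neq0 ssbar_neq0)
                   (omega_treated rand hom R2 T2 ss_neq0 ssbar_neq0).
- rewrite !(Prob_Z_stratum false) => D ssbar_gt0 sbarsbar_gt0.
  have ssbar_neq0 := Prob_stratum_neq0 pmf ssbar_gt0.
  have sbarsbar_neq0 := Prob_stratum_neq0 pmf sbarsbar_gt0.
  rewrite (delta_pot_response rand hom R1 R2 ssbar_neq0 (lt0r_neq0 ssbar_gt0)).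
  rewrite (delta_pot_response rand hom R1 R2 sbarsbar_neq0 (lt0r_neq0 sbarsbar_gt0)).
  exact: cramer2 D (omega_control rand hom R1 C1 ssbar_neq0 sbarsbar_neq0)
                   (omega_control rand hom R2 C2 ssbar_neq0 sbarsbar_neq0).
Qed.
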